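(* Let $m,n$ be positive integers, $\delta>0$, $t>0$. Let $k$ be the smallest integer satisfying $1+2+\dots+2^k\ge n$, let $n_j=2^j$ for $j\in[k-1]$ and let $n_k$ be defined so that $n=\sum_{j\in[k]}n_j$. Then $$\mathrm{GW}(\mathcal{M}^{\mathrm{right}}(m,n,\delta,t)) \leq \sum_{j\in[k]}\mathrm{GW}\Big(\mathcal{A}\big(m,\,n_j,\,2t\sqrt{m/n_j}+\delta,\,t\sqrt{m/n}+\delta,\,t\big)\Big).$$
   Context: For $\theta\in\mathbb{R}^{m\times n}$: $\mathrm{TV}_r(\theta) = \sum_{i\in[m]}\sum_{j\in[n-1]}|\theta[i,j+1]-\theta[i,j]|$, $\mathrm{TV}_c(\theta) = \mathrm{TV}_r(\theta^T)$, $\mathrm{TV}(\theta) = \mathrm{TV}_r(\theta)+\mathrm{TV}_c(\theta)$, $\|\cdot\|$ is the Frobenius norm. $\mathcal{M}^{\mathrm{right}}(m,n,\delta,t) = \{\theta\in\mathbb{R}^{m\times n}: \mathrm{TV}(\theta)\le\|\theta[\cdot,n]\|_1+\delta,\ \|\theta\|\le t\}$ and $\mathcal{A}(m,n,u,v,t) = \{\theta\in\mathbb{R}^{m\times n}: \mathrm{TV}_r(\theta)\le u,\ \mathrm{TV}_c(\theta)\le v,\ \|\theta\|\le t\}$. $\mathrm{GW}(A) = \mathbb{E}\sup_{v\in A}\langle Z,v\rangle$ with $Z$ a matrix of i.i.d. standard normals of matching size. *)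

From HB Require Import structures.
From mathcomp Require Import all_boot all_order all_algebra.
From mathcomp Require Import all_classical all_reals all_analysis.
Set Implicit Arguments. Unset Strict Implicit. Unset Printing Implicit Defensive.
Import Order.TTheory GRing.Theory Num.Theory.
Local Open Scope classical_set_scope.
Local Open Scope ring_scope.

Section Defs.
Variable R : realType.

Definition TVr (m n : nat) (th : 'M[R]_(m, n)) : R :=
  \sum_(i < m) \sum_(j1 < n) \sum_(j2 < n | val j2 == (val j1).+1)
     `|th i j2 - th i j1|.

Definition TVc (m n : nat) (th : 'M[R]_(m, n)) : R := TVr th^T.

Definition TV (m n : nat) (th : 'M[R]_(m, n)) : R := TVr th + TVc th.

Definition frob (m n : nat) (th : 'M[R]_(m, n)) : R :=
  Num.sqrt (\sum_(i < m) \sum_(j < n) th i j ^+ 2).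

Definition lastcol_l1 (m n : nat) (th : 'M[R]_(m, n)) : R :=
  \sum_(i < m) \sum_(j < n | val j == n.-1) `|th i j|.

Definition Mright (m n : nat) (delta t : R) : set 'M[R]_(m, n) :=
  [set th | TV th <= lastcol_l1 th + delta /\ frob th <= t].

Definition Aset (m n : nat) (u v t : R) : set 'M[R]_(m, n) :=
  [set th | TVr th <= u /\ TVc th <= v /\ frob th <= t].

(* Expectation of f(Z_1,...,Z_N) for Z_1..Z_N i.i.d. standard normal,
   computed as the iterated integral against the standard normal law. *)
Fixpoint gauss_iter (N : nat) (f : seq R -> \bar R) : \bar R :=
  match N with
  | 0 => f [::]
  | N'.+1 => (\int[normal_prob (0:R) 1]_x gauss_iter N' (fun s => f (x :: s)))%E
  end.

Definition mx_of_seq (m n : nat) (s : seq R) : 'M[R]_(m, n) :=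
  \matrix_(i < m, j < n) s`_(i * n + j).

Definition frob_inner (m n : nat) (A B : 'M[R]_(m, n)) : R :=
  \sum_(i < m) \sum_(j < n) A i j * B i j.

(* Gaussian width GW(A) = E sup_{v in A} <Z, v> *)
Definition GW (m n : nat) (A : set 'M[R]_(m, n)) : \bar R :=
  gauss_iter (m * n)
    (fun s => ereal_sup [set (frob_inner (mx_of_seq m n s) v)%:E | v in A]).

End Defs.

(* block sizes: n_j = 2^j for j < k, n_k = n - (2^0 + ... + 2^(k-1)) *)
Definition blk (n k j : nat) : nat := (if j < k then 2 ^ j else n - (2 ^ k - 1))%N.
Arguments Mright {R} m n delta t _.
Arguments Aset {R} m n u v t _.

(* For theta in M^right, the triangle inequality along each row
   bounds the l1 norm of the last column by that of any column c plus the row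
   variation to the right of c; hence the row variation of the columns up to c,
   plus TV_c(theta), is at most delta plus the l1 norm of column c.  Averaging
   this over b consecutive columns and using Cauchy-Schwarz gives the bound
   t sqrt(m/b) + delta, so TV_c(theta) <= t sqrt(m/n) + delta, and a block of b
   columns followed by at least b - 1 further columns has row variation at most
   t sqrt(m/b) + delta (the factor 2 in the statement is slack).  Laid out from
   left to right with widths n_k, ..., 4, 2, 1, the dyadic blocks have this
   property, so every block of theta lies in the corresponding set A.  Finally
   <Z, theta> is the sum of the block inner products, the blocks use disjoint
   entries of Z, and the expectation of a sum of nonnegative functions of
   disjoint coordinates is at most the sum of their expectations. *)

From HB Require Import structures.
From mathcomp Require Import all_boot all_order all_algebra.
From mathcomp Require Import all_classical all_reals all_analysis.
From mathcomp Require Import measurable_realfun ring lra zify.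
Set Implicit Arguments. Unset Strict Implicit. Unset Printing Implicit Defensive.
Import Order.TTheory GRing.Theory Num.Theory.
Local Open Scope ring_scope.

Section NatRangeSums.
Variable V : nmodType.

Lemma big_nat_offset (F : nat -> V) o p :
  \sum_(o <= c < p) F c = \sum_(l < p - o) F (o + l)%N.
Proof.
by rewrite -[in LHS](add0n o) big_addn big_mkord; apply: eq_bigr => l _; rewrite addnC.
Qed.

Lemma big_nat_partition (E : nat -> nat) (F : nat -> V) K :
  (forall i j, (i <= j)%N -> (E j <= E i)%N) ->
  \sum_(E K <= c < E 0) F c = \sum_(j < K) \sum_(E j.+1 <= c < E j) F c.
Proof.
move=> E_noninc; elim: K => [|K IH]; first by rewrite big_geq // big_ord0.
by rewrite big_ord_recr /= -IH addrC -big_cat_nat ?E_noninc.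
Qed.

End NatRangeSums.

Section SumInequalities.
Variable R : realType.

Lemma ler_norm_telescope (f : nat -> R) c p : (c <= p)%N ->
  `|f p| <= `|f c| + \sum_(c <= c' < p) `|f c'.+1 - f c'|.
Proof.
move=> cp; rewrite -[f p](subrK (f c)) -telescope_sumr // addrC.
by apply: le_trans (ler_normD _ _) _; rewrite lerD2l ler_norm_sum.
Qed.

Lemma ler_sum_window (H : nat -> R) o b N : (forall c, 0 <= H c) -> (o + b <= N)%N ->
  \sum_(l < b) H (o + l)%N <= \sum_(c < N) H c.
Proof.
move=> H0 obN; have sum0 a c : 0 <= \sum_(a <= i < c) H i by apply: sumr_ge0.
have -> : \sum_(l < b) H (o + l)%N = \sum_(o <= c < o + b) H c.
  by rewrite big_nat_offset addKn.
rewrite -(big_mkord xpredT) (big_cat_nat (leq0n o) (leq_trans (leq_addr b o) obN)) /=.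
by rewrite (big_cat_nat (leq_addr b o) obN) /= addrCA lerDl addr_ge0.
Qed.

Lemma sqr_sum_le_card (I : finType) (a : I -> R) :
  (\sum_i a i) ^+ 2 <= #|I|%:R * \sum_i a i ^+ 2.
Proof.
set S := \sum_i a i ^+ 2.
have sqr_sum : (\sum_i a i) ^+ 2 = \sum_i \sum_j a i * a j.
  by rewrite expr2 mulr_suml; apply: eq_bigr => i _; rewrite mulr_sumr.
have sum_sqr : \sum_i \sum_j (a i ^+ 2 + a j ^+ 2) = 2 * (#|I|%:R * S).
  under eq_bigr do rewrite big_split /= sumr_const.
  by rewrite big_split /= sumr_const sumrMnl -/S -mulr_natl; ring.
have am_gm : 2 * \sum_i \sum_j a i * a j <= \sum_i \sum_j (a i ^+ 2 + a j ^+ 2).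
  rewrite mulr_sumr; apply: ler_sum => i _; rewrite mulr_sumr; apply: ler_sum => j _.
  by have := sqr_ge0 (a i - a j); nra.
by move: am_gm; rewrite sum_sqr -sqr_sum; lra.
Qed.

Lemma l1_le_frob p q (B : 'M[R]_(p, q)) :
  \sum_i \sum_j `|B i j| <= Num.sqrt (p * q)%:R * frob B.
Proof.
have sum_ge0 : 0 <= \sum_i \sum_j `|B i j| by do 2 apply: sumr_ge0 => ? _.
rewrite /frob -sqrtrM // -(ger0_norm sum_ge0) -sqrtr_sqr; apply: ler_wsqrtr.
rewrite !pair_bigA /=; apply: le_trans (sqr_sum_le_card _) _.
rewrite card_prod !card_ord natrM; apply: ler_wpM2l => //.
by apply: ler_sum => ij _; rewrite real_normK ?num_real.
Qed.

End SumInequalities.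

Section TVBasics.
Variable R : realType.

Lemma TVr_ge0 p q (B : 'M[R]_(p, q)) : 0 <= TVr B.
Proof. by do 3 apply: sumr_ge0 => ? _. Qed.

Lemma TVr0 p q : TVr (0 : 'M[R]_(p, q)) = 0.
Proof.
rewrite /TVr big1 // => i _; rewrite big1 // => j _; rewrite big1 // => l _.
by rewrite !mxE subrr normr0.
Qed.

Lemma frob0 p q : frob (0 : 'M[R]_(p, q)) = 0.
Proof.
by rewrite /frob big1 ?sqrtr0 // => i _; rewrite big1 // => j _; rewrite mxE expr0n.
Qed.

Lemma frob_inner0 p q (Z : 'M[R]_(p, q)) : frob_inner Z 0 = 0.
Proof. by rewrite /frob_inner big1 // => i _; rewrite big1 // => j _; rewrite mxE mulr0. Qed.

Lemma Aset0 m n (u v t : R) : 0 <= u -> 0 <= v -> 0 <= t -> Aset m n u v t 0.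
Proof.
by move=> u0 v0 t0; split; [rewrite TVr0 | split; [rewrite /TVc trmx0 TVr0 | rewrite frob0]].
Qed.

Lemma Mright0 m n (delta t : R) : 0 <= delta -> 0 <= t -> Mright m n delta t 0.
Proof.
move=> delta0 t0; split; last by rewrite frob0.
rewrite /TV /TVc trmx0 !TVr0 addr0 /lastcol_l1 big1 ?add0r // => i _.
by rewrite big1 // => j _; rewrite mxE normr0.
Qed.

End TVBasics.

Section ColumnBlocks.
Variables (R : realType) (m : nat).
Implicit Types (o b c : nat).

(* Columns o, ..., o + b - 1 of A; [inord] sends indices beyond n to 0, hence the
   hypotheses o + b <= n.+1 below. *)
Definition col_block n (A : 'M[R]_(m, n.+1)) o b : 'M[R]_(m, b) :=
  colsub (fun l : 'I_b => inord (o + l)) A.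

Definition col_l1 n (A : 'M[R]_(m, n.+1)) c := \sum_(i < m) `|A i (inord c)|.

Definition TVr_prefix n (A : 'M[R]_(m, n.+1)) c :=
  \sum_(i < m) \sum_(0 <= c' < c) `|A i (inord c'.+1) - A i (inord c')|.

Lemma TVrE n (A : 'M[R]_(m, n.+1)) : TVr A = TVr_prefix A n.
Proof.
apply: eq_bigr => i _; rewrite big_ord_recr /= [X in _ + X]big_pred0 => [|j]; last first.
  by apply/negbTE; rewrite neq_ltn ltnS leq_ord.
rewrite addr0 big_mkord; apply: eq_bigr => j _.
rewrite (big_pred1 (inord j.+1)) => [|j']; last first.
  by rewrite /= -(inj_eq val_inj) /= inordK ?ltnS ?ltn_ord.
by congr `|A i _ - A i _|; apply: val_inj; rewrite /= inordK //; apply: leqW.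
Qed.

Lemma lastcol_l1E n (A : 'M[R]_(m, n.+1)) : lastcol_l1 A = col_l1 A n.
Proof.
apply: eq_bigr => i _; rewrite (big_pred1 (inord n)) // => j /=.
by rewrite -(inj_eq val_inj) /= inordK.
Qed.

Lemma TVr_prefix_TVc_le n (A : 'M[R]_(m, n.+1)) delta c :
  TV A <= lastcol_l1 A + delta -> (c <= n)%N ->
  TVr_prefix A c + TVc A <= delta + col_l1 A c.
Proof.
move=> hTV cn.
pose tail := \sum_(i < m) \sum_(c <= c' < n) `|A i (inord c'.+1) - A i (inord c')|.
have TVr_split : TVr A = TVr_prefix A c + tail.
  by rewrite TVrE -big_split; apply: eq_bigr => i _; rewrite -big_cat_nat.
have lastcol_le : lastcol_l1 A <= col_l1 A c + tail.
  rewrite lastcol_l1E -big_split; apply: ler_sum => i _.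
  exact: (ler_norm_telescope (fun c => A i (inord c))).
by move: hTV; rewrite /TV TVr_split; lra.
Qed.

Lemma frob_col_block_le n (A : 'M[R]_(m, n.+1)) o b :
  (o + b <= n.+1)%N -> frob (col_block A o b) <= frob A.
Proof.
move=> obn; apply: ler_wsqrtr; apply: ler_sum => i _.
under eq_bigr do rewrite mxE.
rewrite [X in _ <= X](eq_bigr (fun j : 'I_n.+1 => A i (inord j) ^+ 2)) => [|j _].
  by apply: (@ler_sum_window _ (fun c => A i (inord c) ^+ 2)) => // c; apply: sqr_ge0.
by rewrite inord_val.
Qed.

Lemma TVc_col_block_le n (A : 'M[R]_(m, n.+1)) o b :
  (o + b <= n.+1)%N -> TVc (col_block A o b) <= TVc A.
Proof.
move=> obn; pose H c := \sum_(j1 < m) \sum_(j2 < m | val j2 == (val j1).+1)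
  `|A j2 (inord c) - A j1 (inord c)|.
have -> : TVc (col_block A o b) = \sum_(l < b) H (o + l)%N.
  by apply: eq_bigr => l _; apply: eq_bigr => j1 _; apply: eq_bigr => j2 _; rewrite !mxE.
have -> : TVc A = \sum_(c < n.+1) H c.
  apply: eq_bigr => c _; apply: eq_bigr => j1 _; apply: eq_bigr => j2 _.
  by rewrite !mxE inord_val.
by apply: ler_sum_window => // c; do 2 apply: sumr_ge0 => ? _.
Qed.

Lemma TVr_col_block_le n (A : 'M[R]_(m, n.+1)) o b c : (o + b <= c)%N ->
  TVr (col_block A o b.+1) <= TVr_prefix A c.
Proof.
move=> obc; rewrite TVrE; apply: ler_sum => i _; rewrite !big_mkord.
pose H c := `|A i (inord c.+1) - A i (inord c)|.
rewrite (eq_bigr (fun l : 'I_b => H (o + l)%N)) => [|l _].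
  by apply: (@ler_sum_window _ H) => // c'; apply: normr_ge0.
by have lb := ltn_ord l; rewrite !mxE /H !inordK ?addnS //; lia.
Qed.

Lemma sum_col_l1_le n (A : 'M[R]_(m, n.+1)) o b : (o + b <= n.+1)%N ->
  \sum_(l < b) col_l1 A (o + l) <= Num.sqrt (m * b)%:R * frob A.
Proof.
move=> obn; rewrite exchange_big /=.
apply: le_trans (ler_wpM2l (sqrtr_ge0 _) (frob_col_block_le A obn)).
apply: le_trans (l1_le_frob _).
by apply: ler_sum => i _; apply: ler_sum => l _; rewrite mxE.
Qed.

Lemma le_average_col_l1 n (A : 'M[R]_(m, n.+1)) (X delta t : R) o b :
  (0 < b)%N -> (o + b <= n.+1)%N -> frob A <= t ->
  (forall l, (l < b)%N -> X <= delta + col_l1 A (o + l)) ->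
  X <= t * Num.sqrt (m%:R / b%:R) + delta.
Proof.
move=> b_gt0 obn hA hX; have bR : 0 < b%:R :> R by rewrite ltr0n.
have sqrt_mb : Num.sqrt (m * b)%:R = b%:R * Num.sqrt (m%:R / b%:R) :> R.
  have -> : (m * b)%:R = m%:R / b%:R * b%:R ^+ 2 :> R.
    by rewrite natrM; field; rewrite gt_eqF.
  by rewrite sqrtrM ?divr_ge0 // sqrtr_sqr ger0_norm // mulrC.
have sum_le : \sum_(l < b) col_l1 A (o + l) <= b%:R * (t * Num.sqrt (m%:R / b%:R)).
  apply: le_trans (sum_col_l1_le A obn) _; rewrite sqrt_mb -mulrA ler_wpM2l //.
  by rewrite mulrC ler_wpM2r ?sqrtr_ge0.
have sum_cst (x : R) : b%:R * x = \sum_(l < b) x by rewrite sumr_const card_ord mulr_natl.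
rewrite -(ler_pM2l bR) mulrDr addrC (sum_cst X) (sum_cst delta).
apply: (le_trans _ (lerD (lexx _) sum_le)); rewrite -big_split /=.
by apply: ler_sum => l _; apply: hX.
Qed.

End ColumnBlocks.

Section MrightColumnBlocks.
Variables (R : realType) (m n : nat) (A : 'M[R]_(m, n.+1)) (delta t : R).
Hypotheses (hTV : TV A <= lastcol_l1 A + delta) (hA : frob A <= t).

Lemma TVc_Mright_le : TVc A <= t * Num.sqrt (m%:R / n.+1%:R) + delta.
Proof.
apply: (le_average_col_l1 (A := A) (o := 0)) => // l ln.
apply: le_trans (TVr_prefix_TVc_le hTV ln); rewrite lerDr.
by do 2 apply: sumr_ge0 => ? _.
Qed.

(* Average the prefix bound over the b columns starting at the last one of the block. *)
Lemma TVr_col_block_Mright_le o b : (0 < b)%N -> (o + b + b <= n.+2)%N ->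
  TVr (col_block A o b) <= t * Num.sqrt (m%:R / b%:R) + delta.
Proof.
case: b => // b _ obb.
apply: (le_average_col_l1 (A := A) (o := o + b)) => // [|l lb]; first by lia.
apply: le_trans (TVr_prefix_TVc_le hTV (_ : o + b + l <= n)%N); last by lia.
by rewrite -[X in X <= _]addr0 lerD ?TVr_ge0 // TVr_col_block_le // leq_addr.
Qed.

Lemma col_block_Mright_in_Aset o b : (0 < b)%N -> (o + b + b <= n.+2)%N ->
  Aset m b (2 * t * Num.sqrt (m%:R / b%:R) + delta)
    (t * Num.sqrt (m%:R / n.+1%:R) + delta) t (col_block A o b).
Proof.
move=> b_gt0 obb; have ob : (o + b <= n.+1)%N by lia.
have t_ge0 : 0 <= t by apply: le_trans hA; apply: sqrtr_ge0.
split; last split.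
- apply: le_trans (TVr_col_block_Mright_le b_gt0 obb) _.
  by rewrite lerD2r -mulrA ler_peMl // ?mulr_ge0 ?sqrtr_ge0 // ler1n.
- exact: le_trans (TVc_col_block_le A ob) TVc_Mright_le.
- exact: le_trans (frob_col_block_le A ob) hA.
Qed.

End MrightColumnBlocks.

Lemma frob_inner_col_blocks (R : realType) m n (Z A : 'M[R]_(m, n.+1)) (E : nat -> nat) K :
  (forall i j, (i <= j)%N -> (E j <= E i)%N) -> E 0%N = n.+1 -> E K = 0%N ->
  frob_inner Z A = \sum_(j < K) frob_inner (col_block Z (E j.+1) (E j - E j.+1))
                                           (col_block A (E j.+1) (E j - E j.+1)).
Proof.
move=> E_noninc E0 EK; rewrite exchange_big; apply: eq_bigr => i _ /=.
pose h c := Z i (inord c) * A i (inord c).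
rewrite (eq_bigr (fun c : 'I_n.+1 => h c)) => [|c _]; last by rewrite /h inord_val.
rewrite -(big_mkord xpredT) -E0 -[X in \sum_(X <= _ < _) _]EK big_nat_partition //.
by apply: eq_bigr => j _; rewrite big_nat_offset; apply: eq_bigr => l _; rewrite !mxE.
Qed.

Section BlockIndices.
Variables (m n o b : nat).
Local Open Scope nat_scope.

(* Position, in the row-major flattening of an m x n matrix used by mx_of_seq,
   of entry q (row-major) of its m x b column block starting at column o. *)
Definition block_index q := q %/ b * n + o + q %% b.

Definition block_indices := mkseq block_index (m * b).

Lemma nth_block_indices i l : i < m -> l < b ->
  nth 0 block_indices (i * b + l) = i * n + o + l.
Proof.
move=> im lb; rewrite nth_mkseq /block_index.
  by rewrite divnMDl ?modnMDl ?divn_small ?modn_small ?addn0 //; lia.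
by apply: leq_trans (_ : i.+1 * b <= m * b); rewrite ?leq_mul2r ?im ?orbT //; lia.
Qed.

Hypotheses (b_gt0 : 0 < b) (block_le : o + b <= n).

Lemma block_index_ltn q : block_index q < (q %/ b).+1 * n.
Proof. by rewrite /block_index mulSn; have := ltn_pmod q b_gt0; lia. Qed.

Lemma block_index_mono : {homo block_index : q1 q2 / q1 < q2}.
Proof.
move=> q1 q2 q12; have := leq_div2r b (ltnW q12).
rewrite leq_eqVlt => /orP[/eqP eq_div | lt_div].
  rewrite /block_index eq_div ltn_add2l.
  by move: (divn_eq q1 b) (divn_eq q2 b); rewrite eq_div; lia.
apply: leq_trans (block_index_ltn q1) _.
by rewrite /block_index -addnA (leq_trans _ (leq_addr _ _)) // leq_mul2r lt_div orbT.
Qed.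

Lemma sorted_block_indices : sorted ltn block_indices.
Proof. exact: homo_sorted block_index_mono _ (iota_ltn_sorted 0 _). Qed.

Lemma block_indices_ltn : all (gtn (m * n)) block_indices.
Proof.
apply/allP => i /mapP[q]; rewrite mem_iota => /andP[_ qmb] ->.
apply: leq_trans (block_index_ltn q) _.
by rewrite leq_mul2r ltn_divLR // qmb orbT.
Qed.

Lemma block_indices_mod i : i \in block_indices -> o <= i %% n < o + b.
Proof.
move=> /mapP[q _ ->]; rewrite /block_index -addnA modnMDl modn_small.
  by rewrite leq_addr ltn_add2l ltn_pmod.
by have := ltn_pmod q b_gt0; lia.
Qed.

End BlockIndices.

Lemma mx_of_seq_col_block (R : realType) m n o b (s : seq R) : (o + b <= n.+1)%N ->
  mx_of_seq m b [seq s`_i | i <- block_indices m n.+1 o b] =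
  col_block (mx_of_seq m n.+1 s) o b.
Proof.
move=> obn; apply/matrixP => i l; have lb := ltn_ord l.
rewrite !mxE (nth_map 0%N) ?nth_block_indices ?inordK ?addnA //; first by lia.
rewrite size_mkseq (leq_trans (_ : _ < i.+1 * b)%N) // ?leq_mul2r ?ltn_ord ?orbT //.
by rewrite mulSn; lia.
Qed.

(* The expected suprema integrated below are never shown to be measurable, so
   only the definition of the integral as a supremum over simple functions is used. *)
Section IntegralNonMeasurable.
Context d (T : measurableType d) (R : realType).
Local Open Scope ereal_scope.
Import HBNNSimple.

Lemma ge0_le_integralT (mu : {measure set T -> \bar R}) (f g : T -> \bar R) :
  (forall x, 0 <= f x) -> (forall x, f x <= g x) ->
  \int[mu]_x f x <= \int[mu]_x g x.
Proof.
move=> f0 fg; have g0 x : 0 <= g x := le_trans (f0 x) (fg x).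
rewrite !ge0_integralTE //; apply: ereal_sup_le => _ [h hf <-].
by exists h => // x; exact: le_trans (hf x) (fg x).
Qed.

Variable P : probability T R.

Lemma integral_prob_cst (c : \bar R) : \int[P]_x cst c x = c.
Proof. by rewrite integral_cst // -[RHS]mule1; congr (_ * _); exact: probability_setT. Qed.

Lemma integralDr_cst_le (a : T -> \bar R) (c : \bar R) :
  (forall x, 0 <= a x) -> 0 <= c -> \int[P]_x (a x + c) <= \int[P]_x a x + c.
Proof.
move=> a0; case: c => [r| |] // r0; last first.
  by rewrite addey ?leey // gt_eqF // (lt_le_trans (ltNyr 0%R)) // integral_ge0.
rewrite lee_fin in r0; rewrite ge0_integralTE; last by move=> x; exact: adde_ge0.
apply: ge_ereal_sup => _ [h /= ha <-].
have -> : sintegral P h = \int[P]_x (h x)%:E by rewrite integral_nnsfun // patch_setT.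
pose h' : T -> R := fun x => Num.max (h x - r)%R 0%R.
have mh' : measurable_fun setT (EFin \o h').
  apply/measurable_EFinP/measurable_maxr; last exact: measurable_cst.
  by apply: measurable_funB; [exact: measurable_funPT | exact: measurable_cst].
apply: (@le_trans _ _ (\int[P]_x ((h' x)%:E + r%:E))).
  apply: ge0_le_integralT => x; first by rewrite lee_fin; exact: fun_ge0.
  by rewrite -EFinD lee_fin -lerBlDr le_max lexx.
rewrite ge0_integralD //; first last.
  by move=> x _; rewrite lee_fin le_max lexx orbT.
rewrite (integral_prob_cst r%:E) leeD2r //.
apply: ge0_le_integralT => x; first by rewrite lee_fin le_max lexx orbT.
move: (ha x) (a0 x); case: (a x) => [ax| |] //; rewrite ?leey // !lee_fin => hax ax0.
by rewrite ge_max ax0 andbT lerBlDr.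
Qed.

End IntegralNonMeasurable.

Section GaussIter.
Variable R : realType.
Local Open Scope ereal_scope.
Implicit Types (D : pred nat) (f g : seq R -> \bar R).

Lemma gauss_iter_ge0 N f : (forall s, 0 <= f s) -> 0 <= gauss_iter N f.
Proof.
elim: N f => [|N IH] f f0 /=; first exact: f0.
by apply: integral_ge0 => x _; apply: IH.
Qed.

Lemma le_gauss_iter N f g : (forall s, 0 <= f s) -> (forall s, f s <= g s) ->
  gauss_iter N f <= gauss_iter N g.
Proof.
elim: N f g => [|N IH] f g f0 fg /=; first exact: fg.
apply: ge0_le_integralT => x; first exact: gauss_iter_ge0.
exact: IH.
Qed.

Lemma eq_gauss_iter N f g : f =1 g -> gauss_iter N f = gauss_iter N g.
Proof. by move=> /funext ->. Qed.

Lemma gauss_iter_cst N (c : \bar R) : gauss_iter N (fun=> c) = c.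
Proof. by elim: N => //= N ->; exact: integral_prob_cst. Qed.

Definition depends_on D f :=
  forall s s', (forall i, D i -> s`_i = s'`_i) -> f s = f s'.

Lemma depends_on_cons D f x :
  depends_on D f -> depends_on (fun i => D i.+1) (fun s => f (x :: s)).
Proof. by move=> Df s s' ss'; apply: Df => -[|i] //= /ss'. Qed.

Lemma gauss_iter_cons_irrelevant D f N x :
  depends_on D f -> ~~ D 0%N ->
  gauss_iter N (fun s => f (x :: s)) = gauss_iter N (fun s => f (0%R :: s)).
Proof.
move=> Df nD0; apply: eq_gauss_iter => s; apply: Df => -[|i] //= D0.
by rewrite D0 in nD0.
Qed.

(* Of f and g, the one ignoring the first coordinate leaves the first integral
   as a constant (integralDr_cst_le); induction handles the other coordinates. *)
Lemma gauss_iterD_le N D f g : depends_on D f -> depends_on (predC D) g ->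
  (forall s, 0 <= f s) -> (forall s, 0 <= g s) ->
  gauss_iter N (fun s => f s + g s) <= gauss_iter N f + gauss_iter N g.
Proof.
elim: N D f g => [//|N IH] D f g Df Dg f0 g0.
wlog D0 : D f g Df Dg f0 g0 / D 0%N.
  move=> sym; case: (boolP (D 0%N)) => [|nD0]; first exact: sym.
  have -> : (fun s => f s + g s) = (fun s => g s + f s).
    by apply/funext => s; rewrite addeC.
  rewrite addeC; apply: (sym (predC D)) => // s s' ss'.
  by apply: Df => i Di; apply: ss'; rewrite /= Di.
have g_cst x : gauss_iter N (fun s => g (x :: s)) = gauss_iter N (fun s => g (0%R :: s)).
  by apply: gauss_iter_cons_irrelevant Dg _; rewrite /= D0.
rewrite /= [X in _ <= _ + X](eq_integral (fun=> gauss_iter N (fun s => g (0%R :: s)))).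
  rewrite integral_prob_cst; apply: le_trans; last first.
    by apply: integralDr_cst_le => [x|]; apply: gauss_iter_ge0.
  apply: ge0_le_integralT => x; first by apply: gauss_iter_ge0 => s; apply: adde_ge0.
  rewrite -(g_cst x); apply: (IH (fun i => D i.+1)) => //.
  - exact: depends_on_cons.
  - exact: (depends_on_cons x Dg).
by move=> x _; rewrite g_cst.
Qed.

Lemma gauss_iter_sum_le N K (D : nat -> pred nat) (G : nat -> seq R -> \bar R) :
  (forall j, depends_on (D j) (G j)) -> (forall j s, 0 <= G j s) ->
  (forall j j' i, (j < j' < K)%N -> D j i -> ~~ D j' i) ->
  gauss_iter N (fun s => \sum_(j < K) G j s) <= \sum_(j < K) gauss_iter N (G j).
Proof.
move=> DG G0; elim: K => [|K IH] disj.
  by under eq_gauss_iter do rewrite big_ord0; rewrite big_ord0 gauss_iter_cst.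
under eq_gauss_iter do rewrite big_ord_recr; rewrite big_ord_recr /=.
apply: le_trans (leeD2r _ (IH _)) => [|j j' i /andP[jj' j'K]]; last first.
  by apply: disj; rewrite jj' ltnW.
apply: (@gauss_iterD_le _ (predC (D K))) => //.
- move=> s s' ss'; apply: eq_bigr => j _; apply: DG => i Dji; apply: ss'.
  by apply: (disj _ _ _ _ Dji); rewrite ltn_ord ltnSn.
- by move=> s s' ss'; apply: DG => i DKi; apply: ss'; rewrite /= DKi.
- by move=> s; apply: sume_ge0.
Qed.

Lemma map_nth_cons (x : R) s (l : seq nat) : all (leq 1) l ->
  [seq (x :: s)`_i | i <- l] = [seq s`_i | i <- map predn l].
Proof. by elim: l => //= -[|i] l IH /andP[// _ /IH ->]. Qed.

Lemma gauss_iter_marginal N (idx : seq nat) g :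
  sorted ltn idx -> all (gtn N) idx ->
  gauss_iter N (fun s => g [seq s`_i | i <- idx]) = gauss_iter (size idx) g.
Proof.
elim: N idx g => [|N IH] idx g; first by case: idx.
have IH_shift (l : seq nat) (h : seq R -> \bar R) :
    sorted ltn l -> all (gtn N.+1) l -> all (leq 1) l ->
    gauss_iter N (fun s => h [seq s`_i | i <- map predn l]) = gauss_iter (size l) h.
  move=> sl lN l1; rewrite -(size_map predn) IH //.
    by apply: (homo_sorted_in (P := leq 1)) l1 sl => -[|a] [|b].
  rewrite all_map; apply/allP => i il.
  by move: (allP l1 _ il) (allP lN _ il); case: i {il}.
case: idx => [|i l] sidx idxN; first by rewrite /= gauss_iter_cst integral_prob_cst.
have l1 : all (leq 1) l.
  move: sidx; rewrite /= (path_sortedE ltn_trans) => /andP[+ _].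
  by apply: sub_all => j; apply: leq_ltn_trans.
case: i sidx idxN => [|i] sidx idxN.
- rewrite /=; congr (integral _ _ _); apply: funext => x.
  under eq_gauss_iter do rewrite map_nth_cons //.
  exact: IH_shift (path_sorted sidx) idxN l1.
- rewrite -[RHS](integral_prob_cst (normal_prob 0 1)) [LHS]/=.
  apply: eq_integral => x _.
  under eq_gauss_iter do rewrite map_nth_cons //.
  exact: IH_shift.
Qed.

End GaussIter.

Section GaussianWidthColumnBlocks.
Variables (R : realType) (m n : nat).
Local Open Scope ereal_scope.

Lemma depends_on_col_block o b (F : 'M[R]_(m, b) -> \bar R) : (o + b <= n.+1)%N ->
  depends_on (mem (block_indices m n.+1 o b))
    (fun s => F (col_block (mx_of_seq m n.+1 s) o b)).
Proof.
move=> obn s s' ss'; rewrite -!mx_of_seq_col_block //.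
by congr (F (mx_of_seq _ _ _)); apply/eq_in_map => i /ss'.
Qed.

Lemma GW_col_block o b (S : set 'M[R]_(m, b)) : (0 < b)%N -> (o + b <= n.+1)%N ->
  GW S = gauss_iter (m * n.+1) (fun s =>
    ereal_sup [set (frob_inner (col_block (mx_of_seq m n.+1 s) o b) v)%:E | v in S]).
Proof.
move=> b_gt0 obn; under [RHS]eq_gauss_iter do rewrite -mx_of_seq_col_block //.
rewrite (gauss_iter_marginal
  (fun s => ereal_sup [set (frob_inner (mx_of_seq m b s) v)%:E | v in S])).
- by rewrite size_mkseq.
- exact: sorted_block_indices.
- exact: block_indices_ltn.
Qed.

Theorem GW_le_sum_col_blocks (T : set 'M[R]_(m, n.+1)) (E : nat -> nat) K
    (S : forall j, set 'M[R]_(m, E j - E j.+1)) :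
  (forall i j, (i <= j)%N -> (E j <= E i)%N) -> E 0%N = n.+1 -> E K = 0%N ->
  (forall j, (j < K)%N -> (E j.+1 < E j)%N) -> T 0%R -> (forall j, S j 0%R) ->
  (forall A, T A -> forall j, (j < K)%N -> S j (col_block A (E j.+1) (E j - E j.+1))) ->
  GW T <= \sum_(j < K) GW (S j).
Proof.
move=> E_noninc E0 EK E_dec T0 S0 TS.
have blk_le j : (E j.+1 + (E j - E j.+1) <= n.+1)%N.
  by rewrite subnKC ?E_noninc // -E0 E_noninc.
have blk_gt0 j : (j < K)%N -> (0 < E j - E j.+1)%N by rewrite subn_gt0; apply: E_dec.
pose G j s := ereal_sup [set (frob_inner (col_block (mx_of_seq m n.+1 s) (E j.+1)
                                             (E j - E j.+1)) v)%:E | v in S j].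
have G_ge0 j s : 0 <= G j s.
  by apply: ereal_sup_ubound; exists 0%R => //; rewrite frob_inner0.
rewrite (eq_bigr (fun j : 'I_K => gauss_iter (m * n.+1) (G j))) => [|j _]; last first.
  exact: GW_col_block (blk_gt0 _ (ltn_ord j)) (blk_le j).
apply: (@le_trans _ _ (gauss_iter (m * n.+1) (fun s => \sum_(j < K) G j s))).
  apply: le_gauss_iter => s.
    by apply: ereal_sup_ubound; exists 0%R => //; rewrite frob_inner0.
  apply: ge_ereal_sup => _ [A TA <-].
  rewrite (frob_inner_col_blocks _ _ E_noninc E0 EK) -sumEFin; apply: lee_sum => j _.
  apply: ereal_sup_ubound; exists (col_block A (E j.+1) (E j - E j.+1)) => //.
  exact: TS.
apply: (gauss_iter_sum_le _
  (D := fun j => mem (block_indices m n.+1 (E j.+1) (E j - E j.+1)))).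
- move=> j; exact: (depends_on_col_block
    (fun M => ereal_sup [set (frob_inner M v)%:E | v in S j]) (blk_le j)).
- exact: G_ge0.
move=> j j' i /andP[jj' j'K] /= ij; apply/negP => ij'.
have jK := ltn_trans jj' j'K; have := E_noninc _ _ jj'.
have := block_indices_mod (blk_gt0 _ jK) (blk_le j) ij.
have := block_indices_mod (blk_gt0 _ j'K) (blk_le j') ij'.
lia.
Qed.

End GaussianWidthColumnBlocks.

Section DyadicBlocks.
Local Open Scope nat_scope.

Lemma sum_pow2 K : (\sum_(j < K) 2 ^ j).+1 = 2 ^ K.
Proof. by elim: K => [|K IH]; rewrite ?big_ord0 // big_ord_recr /= -addSn IH expnS; lia. Qed.

Lemma minimal_dyadic_bounds n k : 0 < n -> n <= \sum_(j < k.+1) 2 ^ j ->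
  (forall k', n <= \sum_(j < k'.+1) 2 ^ j -> k <= k') -> 2 ^ k <= n < 2 ^ k.+1.
Proof.
move=> n_gt0 hk hkmin; rewrite -ltnS sum_pow2 in hk; rewrite hk andbT.
case: k hk hkmin => [|k] hk hkmin; first by rewrite expn0.
rewrite leqNgt; apply/negP => lt_n.
by have := hkmin k; rewrite -ltnS sum_pow2 ltnn => /(_ lt_n).
Qed.

Variables (n k : nat).

Definition dyadic_cut j := n - (2 ^ j - 1).

Lemma dyadic_cut_noninc i j : i <= j -> dyadic_cut j <= dyadic_cut i.
Proof. by move=> ij; rewrite leq_sub2l // leq_sub2r // leq_pexp2l. Qed.

Lemma dyadic_cut0 : dyadic_cut 0 = n.
Proof. by rewrite /dyadic_cut subn0. Qed.

Hypothesis dyadic_k : 2 ^ k <= n < 2 ^ k.+1.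

Lemma dyadic_cut_last : dyadic_cut k.+1 = 0.
Proof.
by apply/eqP; rewrite subn_eq0 -ltnS subn1 prednK ?expn_gt0 //; case/andP: dyadic_k.
Qed.

Lemma dyadic_block_spec j : j < k.+1 ->
  [/\ blk n k j = dyadic_cut j - dyadic_cut j.+1, dyadic_cut j.+1 < dyadic_cut j
    & dyadic_cut j + blk n k j <= n.+1].
Proof.
rewrite /blk /dyadic_cut ltnS leq_eqVlt => /orP[/eqP -> | jk].
  by rewrite ltnn; have := dyadic_k; rewrite expnS; split; lia.
have := dyadic_k; have : 2 ^ j.+1 <= 2 ^ k by rewrite leq_pexp2l.
have : 0 < 2 ^ j by rewrite expn_gt0.
by rewrite jk [2 ^ j.+1]expnS; split; lia.
Qed.

End DyadicBlocks.

Theorem lemma5p15 (R : realType) (m n : nat) (delta t : R) (k : nat)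
  (hm : (0 < m)%N) (hn : (0 < n)%N) (hdelta : 0 < delta) (ht : 0 < t)
  (hk : (n <= \sum_(j < k.+1) 2 ^ j)%N)
  (hkmin : forall k' : nat, (n <= \sum_(j < k'.+1) 2 ^ j)%N -> (k <= k')%N) :
  (GW (Mright m n delta t) <=
   \sum_(j < k.+1)
     GW (Aset m (blk n k j)
           (2 * t * Num.sqrt (m%:R / (blk n k j)%:R) + delta)
           (t * Num.sqrt (m%:R / n%:R) + delta) t))%E.
Proof.
have dyadic_k := minimal_dyadic_bounds hn hk hkmin.
case: n hn hk hkmin dyadic_k => // n _ _ _ dyadic_k.
pose E := dyadic_cut n.+1; pose b j := (E j - E j.+1)%N.
have blk_eq j : (j < k.+1)%N -> blk n.+1 k j = b j.
  by case/(dyadic_block_spec dyadic_k).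
under eq_bigr => j _ do rewrite (blk_eq _ (ltn_ord j)).
apply: (@GW_le_sum_col_blocks R m n _ E k.+1 (fun j => Aset m (b j)
  (2 * t * Num.sqrt (m%:R / (b j)%:R) + delta) (t * Num.sqrt (m%:R / n.+1%:R) + delta) t)).
- exact: dyadic_cut_noninc.
- exact: dyadic_cut0.
- exact: dyadic_cut_last.
- by move=> j /(dyadic_block_spec dyadic_k)[].
- by apply: Mright0; apply: ltW.
- by move=> j; apply: Aset0; rewrite ?addr_ge0 ?mulr_ge0 ?sqrtr_ge0 ?ltW.
move=> A [hTV hA] j jk; have [_ cut_lt] := dyadic_block_spec dyadic_k jk.
rewrite blk_eq // => fits.
apply: (@col_block_Mright_in_Aset _ _ _ _ _ _ hTV hA (E j.+1) (b j)).
  by rewrite /b subn_gt0.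
by rewrite /b subnKC // ltnW.
Qed.
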